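(* Let $V$ be a unit intensity Poisson process on $\mathbb{R}^2$ and $R,\alpha>0$. The probability that $Q(0,R)=[-R,R]^2$ is not $\alpha$-sealed is at most $\lceil 8R/\alpha\rceil e^{-\pi\alpha^2/4}$.
   Context: A set $S\subset\mathbb{R}^2$ is $\alpha$-sealed w.r.t. $V$ if $d(x,V)\le\alpha$ for every $x\in\partial S$. *)

From HB Require Import structures.
From mathcomp Require Import all_boot all_order all_algebra.
From mathcomp Require Import all_classical all_reals all_analysis.
From mathcomp Require Import finmap.
Set Implicit Arguments. Unset Strict Implicit. Unset Printing Implicit Defensive.
Import Order.TTheory GRing.Theory Num.Theory.
Import numFieldNormedType.Exports.
Local Open Scope classical_set_scope.
Local Open Scope ring_scope.

Section Defs.
Context {R : realType}.

Definition leb2 : set (R * R) -> \bar R :=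
  (@lebesgue_measure R \x @lebesgue_measure R)%E.

Definition edist (x y : R * R) : R :=
  Num.sqrt ((x.1 - y.1) ^+ 2 + (x.2 - y.2) ^+ 2).

(* d(x,V) = inf_{v in V} |x - v|  (+oo if V is empty) *)
Definition dist_set (x : R * R) (V : set (R * R)) : \bar R :=
  ereal_inf [set (edist x v)%:E | v in V].

Definition bdry (S : set (R * R)) : set (R * R) := closure S `\` interior S.

Definition sealed (alpha : R) (S V : set (R * R)) : Prop :=
  forall x, bdry S x -> (dist_set x V <= alpha%:E)%E.

Definition square (r : R) : set (R * R) :=
  [set x | `|x.1| <= r /\ `|x.2| <= r].

Definition bounded2 (B : set (R * R)) : Prop :=
  exists M : R, B `<=` square M.

Definition borel2 (B : set (R * R)) : Prop :=
  measurable (B : set (measurableTypeR R * measurableTypeR R)%type).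

(* number of points of V in B (meaningful when V `&` B is finite) *)
Definition count (V : set (R * R)) (B : set (R * R)) : nat :=
  #|` fset_set (V `&` B)|%fset.

Definition poisson_process {d : measure_display} {Omega : measurableType d}
  (P : probability Omega R) (V : Omega -> set (R * R)) : Prop :=
  [/\
      (forall w B, bounded2 B -> finite_set (V w `&` B)),
      (forall B, borel2 B -> bounded2 B -> forall k : nat,
         measurable [set w | count (V w) B = k] /\
         P [set w | count (V w) B = k] =
           (expR (- fine (leb2 B)) * fine (leb2 B) ^+ k / (k`!)%:R)%:E) &
      (forall (n : nat) (B : 'I_n -> set (R * R)) (k : 'I_n -> nat),
         (forall i, borel2 (B i) /\ bounded2 (B i)) ->
         (forall i j, i != j -> B i `&` B j = set0) ->
         P (\bigcap_(i in [set: 'I_n]) [set w | count (V w) (B i) = k i]) =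
           (\prod_(i < n) P [set w | count (V w) (B i) = k i])%E)].

End Defs.

From Pilot Require Import Defs.
From HB Require Import structures.
From mathcomp Require Import all_boot all_order all_algebra.
From mathcomp Require Import all_classical all_reals all_analysis.
From mathcomp Require Import ring lra zify.
Import Order.TTheory GRing.Theory Num.Theory.
Import numFieldNormedType.Exports.
Local Open Scope classical_set_scope.
Local Open Scope ring_scope.

(* The boundary of [-r, r]^2 is its perimeter, a closed path of length 8r that
   is 1-Lipschitz for the l1 distance.  Cutting it into N = ceil(8r/alpha) arcs
   of length at most alpha, every boundary point lies within l1 distance alpha/2
   of the midpoint c of its arc.  Around each c we place a staircase S(c) of
   seven rectangles contained in every Euclidean disc of radius alpha centred
   within l1 distance alpha/2 of c; a staircase is used instead of the paper's
   disc because its product Lebesgue measure is elementary, and its area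
   0.8024 alpha^2 still exceeds pi alpha^2 / 4 since pi < 3.2.  If the square is
   not alpha-sealed, some S(c) misses V, which has probability
   exp(-|S(c)|) <= exp(-pi alpha^2 / 4); the union bound over the N arcs
   concludes. *)

Section PiUpperBound.
Context {R : realType}.

Lemma cos_coeff'E_sign (x : R) n :
  cos_coeff' x n = (-1) ^+ n * x ^+ n.*2 / (n.*2)`!%:R.
Proof. by rewrite /cos_coeff' -exprnP. Qed.

Lemma cos_coeff'_pair_lt0 (c : R) n : 0 < c -> odd n ->
  c ^+ 2 < (n.*2.+2)%:R * (n.*2.+1)%:R ->
  0 < - cos_coeff' c n - cos_coeff' c n.+1.
Proof.
move=> c0 n_odd c_small; rewrite !cos_coeff'E_sign.
rewrite exprS -signr_odd n_odd expr1 !mulN1r !opprK doubleS !factS !exprS !natrM.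
set F : R := (n.*2)`!%:R; set X := c ^+ n.*2.
set A : R := (n.*2.+2)%:R; set B : R := (n.*2.+1)%:R.
have F0 : 0 < F by rewrite ltr0n fact_gt0.
have A0 : 0 < A by rewrite ltr0n.
have B0 : 0 < B by rewrite ltr0n.
have -> : - (- X / F) - 1 * (c * (c * X)) / (A * (B * F)) =
          X / (A * (B * F)) * (A * B - c ^+ 2) by field; rewrite !gt_eqF.
by rewrite mulr_gt0 ?subr_gt0 // divr_gt0 ?exprn_gt0 // !mulr_gt0.
Qed.

Lemma cos_lt_taylor4 (c : R) : 0 < c -> c ^+ 2 < 42%:R ->
  cos c < 1 - c ^+ 2 / 2 + c ^+ 4 / 24%:R.
Proof.
move=> c0 c_small.
have cvg_ncos : series (- cos_coeff' c) @ \oo --> - cos c.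
  by rewrite seriesN; exact: cvgN (@cvg_cos_coeff' R c).
have : \sum_(0 <= i < 3) (- cos_coeff' c) i < limn (series (- cos_coeff' c)).
  apply: lt_sum_lim_series; first exact: cvgP cvg_ncos.
  move=> d; rewrite addnS; apply: cos_coeff'_pair_lt0 => //.
    by rewrite oddD odd_double.
  by apply: lt_le_trans c_small _; rewrite -natrM ler_nat !doubleD; nia.
rewrite (cvg_lim (@Rhausdorff R) cvg_ncos) !big_nat_recr //= big_nil opprfctE.
have -> : cos_coeff' c 0 = 1 by rewrite cos_coeff'E_sign expr0 mul1r divr1.
have -> : cos_coeff' c 1 = - (c ^+ 2 / 2).
  by rewrite cos_coeff'E_sign expr1 mulN1r mulNr.
have -> : cos_coeff' c 2 = c ^+ 4 / 24%:R.
  by rewrite cos_coeff'E_sign sqrrN expr1n mul1r.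
lra.
Qed.

Lemma pi_lt_16_5 : pi < 16%:R / 5%:R :> R.
Proof.
set c : R := 8%:R / 5%:R.
have c0 : 0 < c by rewrite divr_gt0 ?ltr0n.
have cos_c : cos c < 0.
  have c2 : c ^+ 2 = 64%:R / 25%:R by rewrite /c; field.
  have c4 : c ^+ 4 = (64%:R / 25%:R) ^+ 2 by rewrite -c2 -exprM.
  have := @cos_lt_taylor4 c c0; rewrite c4 c2 expr2; lra.
rewrite ltNge; apply/negP => pi_ge.
have : 0 <= cos c.
  apply: cos_ge0_pihalf; apply/andP; split; last by rewrite /c; lra.
  by rewrite (le_trans _ (ltW c0)) // oppr_le0 divr_ge0 // pi_ge0.
lra.
Qed.

End PiUpperBound.

Section SquareBoundary.
Context {R : realType}.
Implicit Types (r s t : R) (x : R * R).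

Definition l1dist x (y : R * R) : R := `|x.1 - y.1| + `|x.2 - y.2|.

Definition perimeter r t : R * R :=
  if t <= 2 * r then (t - r, - r)
  else if t <= 4 * r then (r, t - 3 * r)
  else if t <= 6 * r then (5 * r - t, r)
  else (- r, 7 * r - t).

Lemma normr_sum_le_signs (A B D : R) :
  A + B <= D -> A - B <= D -> - A + B <= D -> - A - B <= D -> `|A| + `|B| <= D.
Proof.
by move=> *; have [HA|HA] := lerP 0 A; have [HB|HB] := lerP 0 B;
  rewrite ?(ger0_norm HA) ?(ltr0_norm HA) ?(ger0_norm HB) ?(ltr0_norm HB); lra.
Qed.

Lemma perimeter_lipschitz r s t : 0 < r ->
  l1dist (perimeter r s) (perimeter r t) <= `|s - t|.
Proof.
move=> r0; wlog st : s t / s <= t.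
  move=> h; case/orP: (le_total s t) => [/h//|/h].
  by rewrite /l1dist (distrC t) (distrC (perimeter r t).1) (distrC (perimeter r t).2).
rewrite distrC (ger0_norm (_ : 0 <= t - s)) ?subr_ge0 // /perimeter /l1dist.
by repeat case: ifP => ?; apply: normr_sum_le_signs => /=; lra.
Qed.

Lemma nbhs_box x {e1 e2 : R} : 0 < e1 -> 0 < e2 ->
  nbhs x [set y | `|x.1 - y.1| < e1 /\ `|x.2 - y.2| < e2].
Proof.
move=> e10 e20; exists (ball x.1 e1, ball x.2 e2) => /=.
  by split; apply: nbhsx_ballx.
by move=> [y1 y2] /= [b1 b2]; move: b1 b2; rewrite -!ball_normE.
Qed.

Lemma closure_square r x : closure (square r) x -> `|x.1| <= r /\ `|x.2| <= r.
Proof.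
move=> cl_x; split; rewrite leNgt; apply/negP => out.
  have e0 : 0 < `|x.1| - r by lra.
  have [y [[y1 _] [near1 _]]] := cl_x _ (nbhs_box x e0 ltr01).
  by have := lerB_dist x.1 y.1; move: near1 => /=; lra.
have e0 : 0 < `|x.2| - r by lra.
have [y [[_ y2] [_ near2]]] := cl_x _ (nbhs_box x ltr01 e0).
by have := lerB_dist x.2 y.2; move: near2 => /=; lra.
Qed.

Lemma bdry_square r x : bdry (square r) x ->
  [/\ `|x.1| <= r, `|x.2| <= r & ~ (`|x.1| < r /\ `|x.2| < r)].
Proof.
case=> /closure_square[le1 le2] int_x; split=> // -[lt1 lt2]; apply: int_x.
have e1 : 0 < r - `|x.1| by lra.
have e2 : 0 < r - `|x.2| by lra.
apply: filterS (nbhs_box x e1 e2) => y [b1 b2]; split.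
  by have := lerB_dist y.1 x.1; rewrite distrC; lra.
by have := lerB_dist y.2 x.2; rewrite distrC; lra.
Qed.

Lemma bdry_square_perimeter {r x} : 0 < r -> bdry (square r) x ->
  exists2 s, 0 <= s <= 8 * r & x = perimeter r s.
Proof.
case: x => x1 x2 r0 /bdry_square[/= le1 le2 not_int].
have [ge1 le1'] : - r <= x1 /\ x1 <= r by apply/andP; rewrite -ler_norml.
have [ge2 le2'] : - r <= x2 /\ x2 <= r by apply/andP; rewrite -ler_norml.
have [on1|on2] : r <= `|x1| \/ r <= `|x2|.
  apply: contrapT => /not_orP[/negP + /negP]; rewrite -!ltNge => lt1 lt2.
  exact: not_int.
- have [s1|s1] := lerP 0 x1; rewrite ?(ger0_norm s1) ?(ltr0_norm s1) in on1.
    exists (3 * r + x2); first by apply/andP; lra.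
    by rewrite /perimeter; repeat case: ifP => ?; congr pair; lra.
  exists (7 * r - x2); first by apply/andP; lra.
  by rewrite /perimeter; repeat case: ifP => ?; congr pair; lra.
- have [s2|s2] := lerP 0 x2; rewrite ?(ger0_norm s2) ?(ltr0_norm s2) in on2.
    exists (5 * r - x1); first by apply/andP; lra.
    by rewrite /perimeter; repeat case: ifP => ?; congr pair; lra.
  exists (x1 + r); first by apply/andP; lra.
  by rewrite /perimeter; repeat case: ifP => ?; congr pair; lra.
Qed.

End SquareBoundary.

Lemma midpoint_cover {R : realType} (L s : R) N : 0 < L -> 0 <= s <= N%:R * L ->
  (0 < N)%N -> exists2 i, (i < N)%N & `|s - (i%:R + 1/2) * L| <= L / 2.
Proof.
move=> L0 /andP[s0]; elim: N => // N IH sN _.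
have [s_le|s_gt] := lerP s (N%:R * L).
  case: N IH s_le {sN} => [_|N IH /IH[// | i iN si]]; last first.
    by exists i => //; exact: ltnW.
  rewrite mul0r => s_le; exists 0%N => //.
  by rewrite mulr0n add0r ler_norml; apply/andP; split; lra.
exists N => //; move: sN; rewrite -natr1 => sN.
by rewrite ler_norml; apply/andP; split; lra.
Qed.

Section Staircase.
Context {R : realType}.
Implicit Types (a : R) (c x y : R * R) (k : nat).

(* In units of [a], slab [k] is [[-hw k, hw k] x [cut k, cut k.+1)], and
   [ht k] bounds its heights in absolute value. *)
Definition stair_cut k : R :=
  (match k with 0 => - 47%:R | 1 => - 41%:R | 2 => - 31%:R | 3 => - 19%:R
   | 4 => 19%:R | 5 => 31%:R | 6 => 41%:R | _ => 47%:R end) / 100%:R.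
Definition stair_hw k : R :=
  (match k with 0 | 6 => 24 | 1 | 5 => 41 | 2 | 4 => 45 | _ => 48 end)%:R / 100%:R.
Definition stair_ht k : R :=
  (match k with 0 | 6 => 47 | 1 | 5 => 41 | 2 | 4 => 31 | _ => 19 end)%:R / 100%:R.

Definition slab c a k : set (R * R) :=
  [set` `[c.1 - a * stair_hw k, c.1 + a * stair_hw k]] `*`
  [set` `[c.2 + a * stair_cut k, c.2 + a * stair_cut k.+1[].

Definition stair c a : set (R * R) := \big[setU/set0]_(k < 7) slab c a k.

Lemma stair_cut_homo : {homo stair_cut : m n / (m <= n)%N >-> m <= n}.
Proof.
apply: homo_leq => [x|y x z|k]; [exact: lexx | exact: le_trans |].
by rewrite /stair_cut; case: k => [|[|[|[|[|[|[|k]]]]]]] /=; lra.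
Qed.

Lemma stair_table {k} : (k < 7)%N ->
  [/\ 0 < stair_hw k, stair_cut k < stair_cut k.+1,
      - stair_ht k <= stair_cut k /\ stair_cut k.+1 <= stair_ht k,
      (stair_hw k + 1/2) ^+ 2 + stair_ht k ^+ 2 <= 1 &
      stair_hw k ^+ 2 + (stair_ht k + 1/2) ^+ 2 <= 1].
Proof.
rewrite /stair_hw /stair_cut /stair_ht.
by case: k => [|[|[|[|[|[|[|]]]]]]] // _; cbv iota beta; rewrite !expr2; split; lra.
Qed.

Lemma slab_borel c a k : borel2 (slab c a k).
Proof. by apply: measurableX; exact: measurable_itv. Qed.

Lemma stair_borel c a : borel2 (stair c a).
Proof. by apply: bigsetU_measurable => k _; exact: slab_borel. Qed.

Lemma leb2_slab c a k : 0 < a -> (k < 7)%N ->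
  leb2 (slab c a k) = (2 * a * stair_hw k * (a * (stair_cut k.+1 - stair_cut k)))%:E.
Proof.
move=> a0 /stair_table[hw0 cutS _ _ _].
rewrite /leb2 product_measure1E; try exact: measurable_itv.
rewrite -[(_ * _)%E]/(lebesgue_measure
    [set` `[(c.1 - a * stair_hw k)%R, (c.1 + a * stair_hw k)%R]] *
  lebesgue_measure [set` `[(c.2 + a * stair_cut k)%R, (c.2 + a * stair_cut k.+1)%R[])%E.
rewrite !lebesgue_measure_itv /= !lte_fin ifT; last nra.
rewrite ifT; last nra.
by rewrite -!EFinD -EFinM; congr (_%:E); ring.
Qed.

Lemma slab_disjoint c a (i j : 'I_7) : 0 < a ->
  slab c a i `&` slab c a j !=set0 -> i = j.
Proof.
move=> a0 [y [[_ /andP[+ +]] [_ /andP[+ +]]]]; rewrite !bnd_simp.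
have cut_le m n : (m <= n)%N -> a * stair_cut m <= a * stair_cut n.
  by move=> mn; apply: ler_wpM2l; [exact: ltW | exact: stair_cut_homo].
move=> lo_i hi_i lo_j hi_j; case: (ltngtP i j) => [ij|ji|/val_inj//].
  by exfalso; have := cut_le _ _ ij; lra.
by exfalso; have := cut_le _ _ ji; lra.
Qed.

Lemma leb2_stair c a : 0 < a -> leb2 (stair c a) = (a ^+ 2 * (2006%:R / 2500%:R))%:E.
Proof.
move=> a0; rewrite /leb2 measure_bigsetU_ord.
- rewrite (eq_bigr (fun k : 'I_7 =>
    (2 * a * stair_hw k * (a * (stair_cut k.+1 - stair_cut k)))%:E)); last first.
    by move=> k _; rewrite -[LHS]/(leb2 _) leb2_slab.
  rewrite sumEFin !big_ord_recr big_ord0 /= /stair_hw /stair_cut /=.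
  by congr (_%:E); field.
- by move=> k; exact: slab_borel.
- by move=> i j _ _; exact: slab_disjoint.
Qed.

Lemma stair_mem {c a y} : 0 < a -> stair c a y ->
  exists2 k, (k < 7)%N & `|y.1 - c.1| <= a * stair_hw k /\ `|y.2 - c.2| <= a * stair_ht k.
Proof.
move=> a0; rewrite /stair -bigcup_mkord => -[k /= k7 [/andP[+ +] /andP[+ +]]].
have [_ _ [lo_ht hi_ht] _ _] := stair_table k7; rewrite !bnd_simp => *.
have : a * - stair_ht k <= a * stair_cut k by rewrite ler_wpM2l // ltW.
have : a * stair_cut k.+1 <= a * stair_ht k by rewrite ler_wpM2l // ltW.
by exists k => //; rewrite !ler_norml; split; apply/andP; split; lra.
Qed.

Lemma stair_bounded {c a} : 0 < a -> bounded2 (stair c a).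
Proof.
move=> a0; exists (`|c.1| + `|c.2| + a).
move=> y /(stair_mem a0)[k /stair_table[hw0 _ _ c1 c2]].
have ht0 : 0 <= stair_ht k by rewrite divr_ge0.
have hw1 : a * stair_hw k <= a by rewrite ger_pMr //; nra.
have ht1 : a * stair_ht k <= a by rewrite ger_pMr //; nra.
have := ler_normD (y.1 - c.1) c.1; have := ler_normD (y.2 - c.2) c.2.
have := normr_ge0 c.1; have := normr_ge0 c.2.
by rewrite !subrK => *; split; lra.
Qed.

(* The squared distance is convex in (u, v), so it suffices to check the
   vertices of the diamond |u| + |v| <= a / 2; in units of [a], the two disc
   hypotheses say that the corners of [[-w, w] x [-h, h]] are within distance 1
   of the vertices (+-1/2, 0) and (0, +-1/2). *)
Lemma disc_contains_rect (a w h p q u v : R) : 0 < a -> 0 <= w -> 0 <= h ->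
  (w + 1/2) ^+ 2 + h ^+ 2 <= 1 -> w ^+ 2 + (h + 1/2) ^+ 2 <= 1 ->
  `|p| <= a * w -> `|q| <= a * h -> `|u| + `|v| <= a / 2 ->
  (p - u) ^+ 2 + (q - v) ^+ 2 <= a ^+ 2.
Proof.
move=> a0 w0 h0 c1 c2 hp hq huv.
have sqr_le (s t M : R) : `|s| <= M -> (s - t) ^+ 2 <= (M + `|t|) ^+ 2.
  move=> sM; rewrite -real_normK ?num_real // lerXn2r ?nnegrE //.
    by rewrite addr_ge0 // (le_trans (normr_ge0 s) sM).
  by rewrite (le_trans (ler_normB _ _)) // lerD2r.
apply: le_trans (lerD (sqr_le _ u _ hp) (sqr_le _ v _ hq)) _.
have U0 := normr_ge0 u; have V0 := normr_ge0 v.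
set U := `|u| in huv U0 *; set V := `|v| in huv V0 *.
have e1 : 0 <= (a - 2 * U) * (1 - (w ^+ 2 + (h + 1/2) ^+ 2)) by apply: mulr_ge0; lra.
have e2 : 0 <= U * (1 - ((w + 1/2) ^+ 2 + h ^+ 2)) by apply: mulr_ge0; lra.
have e3 : 0 <= (a / 2 - U - V) * (2 * a * h + a / 2 - U + V) by apply: mulr_ge0; nra.
have e4 : 0 <= U * (a / 2 - U) by apply: mulr_ge0; lra.
nra.
Qed.

Lemma edist_stair_le c a x y : 0 < a -> l1dist x c <= a / 2 -> stair c a y ->
  Defs.edist x y <= a.
Proof.
move=> a0 xc /(stair_mem a0)[k /stair_table[hw0 _ _ c1 c2] [y1 y2]].
have ht0 : 0 <= stair_ht k by rewrite divr_ge0.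
have near_xy := @disc_contains_rect a _ _ _ _ _ _ a0 (ltW hw0) ht0 c1 c2 y1 y2 xc.
rewrite /Defs.edist -(ger0_norm (ltW a0)) -sqrtr_sqr; apply: ler_wsqrtr.
by apply: le_trans near_xy; rewrite le_eqVlt; apply/orP; left; apply/eqP; ring.
Qed.

End Staircase.

Section Sealing.
Context {R : realType}.

Definition stair_center (r : R) N i : R * R :=
  perimeter r ((i%:R + 1/2) * (8 * r / N%:R)).

Lemma sealed_square_of_stairs (V : set (R * R)) (r a : R) N :
  0 < r -> 0 < a -> (0 < N)%N -> 8 * r <= N%:R * a ->
  (forall i, (i < N)%N -> V `&` stair (stair_center r N i) a !=set0) ->
  sealed a (square r) V.
Proof.
move=> r0 a0 N0 rN hit x /(bdry_square_perimeter r0)[s s08 ->].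
have N0r : 0 < N%:R :> R by rewrite ltr0n.
set L := 8 * r / N%:R.
have NL : N%:R * L = 8 * r by rewrite mulrC divfK ?gt_eqF.
have L0 : 0 < L by rewrite divr_gt0 ?mulr_gt0.
have La : L <= a by rewrite ler_pdivrMr // (mulrC a).
have [i iN si] : exists2 i, (i < N)%N & `|s - (i%:R + 1/2) * L| <= L / 2.
  by apply: midpoint_cover; rewrite ?NL.
have [v [Vv Sv]] := hit i iN.
apply: le_trans (ereal_inf_lbound _) _; first by exists v.
rewrite lee_fin; apply: edist_stair_le a0 _ Sv.
by apply: le_trans (perimeter_lipschitz r _ _ r0) _; lra.
Qed.

Lemma count_neq0 (V B : set (R * R)) : Defs.count V B <> 0%N -> V `&` B !=set0.
Proof.
move=> cnt; apply/set0P/negP => /eqP VB0.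
by apply: cnt; rewrite /Defs.count VB0 fset_set0.
Qed.

Lemma poisson_stair_empty {d} {Omega : measurableType d} {P : probability Omega R}
    {V : Omega -> set (R * R)} (c : R * R) {a : R} :
  poisson_process P V -> 0 < a ->
  measurable [set w | Defs.count (V w) (stair c a) = 0%N] /\
  (P [set w | Defs.count (V w) (stair c a) = 0%N] <= (expR (- (pi * a ^+ 2 / 4)))%:E)%E.
Proof.
case=> _ counts _ a0.
have [mE ->] := counts _ (stair_borel c a) (stair_bounded a0) 0%N.
(* 2006 / 2500 > pi / 4 by [pi_lt_16_5] *)
split=> //; rewrite leb2_stair //= expr0 mulr1 fact0 divr1 lee_fin ler_expR lerN2.
have := @pi_lt_16_5 R; have : 0 < a ^+ 2 by rewrite exprn_gt0.
nra.
Qed.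

End Sealing.

Theorem lemma10 (R : realType) (d : measure_display) (Omega : measurableType d)
  (P : probability Omega R) (V : Omega -> set (R * R)) (r alpha : R) :
  poisson_process P V -> 0 < r -> 0 < alpha ->
  exists A : set Omega,
    [/\ measurable A,
        [set w | ~ sealed alpha (square r) (V w)] `<=` A &
        (P A <= ((Num.ceil (8 * r / alpha))%:~R
                  * expR (- (pi * alpha ^+ 2 / 4)))%:E)%E].
Proof.
move=> PV r0 a0.
have q0 : 0 < 8 * r / alpha by rewrite divr_gt0 ?mulr_gt0.
have ceil_nneg : 0 <= Num.ceil (8 * r / alpha) by rewrite ceil_ge0 //; lra.
set N := `|Num.ceil (8 * r / alpha)|%N.
have eN : N%:R = (Num.ceil (8 * r / alpha))%:~R :> R.
  by rewrite /N -[in RHS](gez0_abs ceil_nneg).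
have rN : 8 * r <= N%:R * alpha by rewrite eN -ler_pdivrMr // ceil_ge.
have N0 : (0 < N)%N by rewrite -(ltr0n R); nra.
pose E i := [set w | Defs.count (V w) (stair (stair_center r N i) alpha) = 0%N].
have E_meas i : measurable (E i) := (poisson_stair_empty (stair_center r N i) PV a0).1.
have A_meas : measurable (\big[setU/set0]_(i < N) E i).
  by apply: bigsetU_measurable => i _.
exists (\big[setU/set0]_(i < N) E i); split => //.
- move=> w /= not_sealed; apply: contrapT => notA; apply: not_sealed.
  apply: (@sealed_square_of_stairs _ _ r alpha N) => // i iN; apply: count_neq0 => Ei.
  by apply: notA; rewrite -bigcup_mkord; exists i.
- have subadd := @content_subadditive _ _ _ P _ E N (fun i _ => E_meas i) A_meas.
  apply: le_trans (subadd (fun _ h => h)) _.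
  apply: (@le_trans _ _ (\sum_(i < N) (expR (- (pi * alpha ^+ 2 / 4)))%:E)).
    by apply: lee_sum => i _; exact: (poisson_stair_empty _ PV a0).2.
  by rewrite sumEFin sumr_const card_ord -eN mulr_natl.
Qed.
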